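(* Let $A$ be a synaptic algebra, $p,q\in P$, and put $r_p:=p\wedge(p^{\perp}\vee q)\wedge(p^{\perp}\vee q^{\perp})$ and $r_q:=q\wedge(p\vee q^{\perp})\wedge(p^{\perp}\vee q^{\perp})$. Then $pCq$ iff $r_p=r_q=0$ iff $r_pCr_q$.
   Context: Synaptic algebra (Foulis): $R$ is a real linear associative algebra with unit $1$, and $A\subseteq R$ is a real linear subspace with $1\in A$. For $a,b\in A$ write $aCb$ iff $ab=ba$; $C(a):=\{b\in A: aCb\}$; $CC(a):=\{b\in A: bCd \text{ for all } d\in C(a)\}$. $A$ is a synaptic algebra with enveloping algebra $R$ iff: (SA1) $A$ is a partially ordered archimedean real linear space with positive cone $A^+$, $1$ is an order unit, $\|\cdot\|$ the order-unit norm; (SA2) $a\in A\Rightarrow a^2\in A^+$; (SA3) $a,b\in A^+\Rightarrow aba\in A^+$; (SA4) if $a\in A$, $b\in A^+$, $aba=0$ then $ab=ba=0$; (SA5) if $a\in A^+$ there is $b\in A^+\cap CC(a)$ with $b^2=a$; (SA6) for $a\in A$ there is $p=p^2\in A$ with $ab=0\Leftrightarrow pb=0$ for all $b\in A$; (SA7) if $1\le a$ there is $b\in A$ with $ab=ba=1$; (SA8) if $a,b\in A$, $a_1\le a_2\le\cdots$ are pairwise commuting elements of $C(b)$ with $\|a-a_n\|\to0$, then $a\in C(b)$. $A$ is nondegenerate. $P:=\{p\in A:p=p^2\}$ with the order inherited from $A$ is an orthomodular lattice with orthocomplement $p^{\perp}:=1-p$, meet $\wedge$, join $\vee$. *)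

From HB Require Import structures.
From mathcomp Require Import all_boot all_order all_algebra.
From mathcomp Require Import Rstruct.
Set Implicit Arguments. Unset Strict Implicit. Unset Printing Implicit Defensive.
Import Order.TTheory GRing.Theory Num.Theory.
Local Open Scope ring_scope.

Notation Rreal := Rdefinitions.R.

Section Synaptic.
Variable (E : algType Rreal).   (* the enveloping algebra R *)
Variables (A Pos : {pred E}).

Definition sle (a b : E) : Prop := (b - a) \in Pos.

Definition commutes (a b : E) : Prop := a * b = b * a.

Definition CCset (a : E) (b : E) : Prop :=
  b \in A /\ forall d, d \in A -> commutes a d -> commutes b d.

(* ||x|| < eps for the order-unit norm, unfolded: -eps 1 <= x <= eps 1 *)
Definition within (x : E) (eps : Rreal) : Prop :=
  sle (- (eps *: 1)) x /\ sle x (eps *: 1).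

Record synaptic : Prop := {
  sA_0 : 0 \in A;
  sA_1 : 1 \in A;
  sA_add : forall a b, a \in A -> b \in A -> a + b \in A;
  sA_scale : forall (k : Rreal) a, a \in A -> k *: a \in A;
  sA_nondeg : (1 : E) != 0;
  sPos_sub : forall a, a \in Pos -> a \in A;
  sPos_add : forall a b, a \in Pos -> b \in Pos -> a + b \in Pos;
  sPos_scale : forall (k : Rreal) a, 0 <= k -> a \in Pos -> k *: a \in Pos;
  sPos_antisym : forall a, a \in Pos -> - a \in Pos -> a = 0;
  sPos_unit : forall a, a \in A -> exists k : Rreal, sle a (k *: 1);
  sPos_archi : forall a b, a \in A -> b \in A ->
      (forall n : nat, sle (a *+ n) b) -> sle a 0;
  sSA2 : forall a, a \in A -> a * a \in Pos;
  sSA3 : forall a b, a \in Pos -> b \in Pos -> a * b * a \in Pos;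
  sSA4 : forall a b, a \in A -> b \in Pos -> a * b * a = 0 ->
      a * b = 0 /\ b * a = 0;
  sSA5 : forall a, a \in Pos -> exists b, b \in Pos /\ CCset a b /\ b * b = a;
  sSA6 : forall a, a \in A -> exists p, p \in A /\ p * p = p /\
      (forall b, b \in A -> (a * b = 0 <-> p * b = 0));
  sSA7 : forall a, a \in A -> sle 1 a -> exists b, b \in A /\ a * b = 1 /\ b * a = 1;
  sSA8 : forall (a b : E) (u : nat -> E), a \in A -> b \in A ->
      (forall n, u n \in A) ->
      (forall n, sle (u n) (u n.+1)) ->
      (forall m n, commutes (u m) (u n)) ->
      (forall n, commutes (u n) b) ->
      (forall eps : Rreal, 0 < eps -> exists N, forall n, (N <= n)%N -> within (a - u n) eps) ->
      commutes a b
}.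

Definition proj (p : E) : Prop := p \in A /\ p * p = p.

Definition perp (p : E) : E := 1 - p.

Definition is_meetP (x y m : E) : Prop :=
  proj m /\ sle m x /\ sle m y /\
  forall z, proj z -> sle z x -> sle z y -> sle z m.

Definition is_joinP (x y j : E) : Prop :=
  proj j /\ sle x j /\ sle y j /\
  forall z, proj z -> sle x z -> sle y z -> sle j z.

End Synaptic.

From mathcomp Require Import all_boot all_order all_algebra.
From mathcomp Require Import Rstruct.
Import GRing.Theory Num.Theory.
Set Implicit Arguments. Unset Strict Implicit.
Local Open Scope ring_scope.

(* Let a = p /\ q, b = p /\ q^perp and c = p^perp /\ q.  Since b <= p and
   a <= p - b, the projection r_p is p - b - a, and likewise r_q = q - c - a.
   If pCq these are p - p(1-q) - pq = 0 and its mirror image; conversely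
   r_p = 0 gives p = a + b, a sum of projections commuting with q.  Finally,
   if r_p C r_q then r_p = r_p r_q + r_p (1 - r_q), and both summands are
   meets of commuting projections that vanish: a projection below r_p and
   r_q lies below a and a^perp, while one below r_p and r_q^perp is
   orthogonal to r_q + c + a = q, hence lies below b and b^perp. *)

Section Synaptic.
Variables (E : algType Rreal) (A Pos : {pred E}).
Hypothesis synA : synaptic A Pos.

Lemma perpK (x : E) : perp (perp x) = x.
Proof. exact: subKr. Qed.

Lemma sle_perp (x y : E) : sle Pos (perp x) (perp y) = sle Pos y x.
Proof. by rewrite /sle /perp opprB addrC addrA subrK. Qed.

Lemma sle_trans (x y z : E) : sle Pos x y -> sle Pos y z -> sle Pos x z.
Proof. by rewrite /sle => xy yz; rewrite -(subrKA y); apply: (sPos_add synA). Qed.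

Lemma memA_sub (x y : E) : x \in A -> y \in A -> x - y \in A.
Proof.
by move=> xA yA; apply: (sA_add synA) => //; rewrite -scaleN1r; apply: (sA_scale synA).
Qed.

Lemma memA_mul_comm (x y : E) :
  x \in A -> y \in A -> commutes x y -> x * y \in A.
Proof.
move=> xA yA cxy; have sqA z : z \in A -> z * z \in A.
  by move=> zA; apply/(sPos_sub synA)/(sSA2 synA).
have xy2A : (x * y) *+ 2 \in A.
  have -> : (x * y) *+ 2 = (x + y) * (x + y) - (x * x + y * y).
    by rewrite mulrDl !mulrDr -cxy mulr2n [x * x + x * y]addrC addrACA addrK.
  by apply: memA_sub; [|apply: (sA_add synA)]; apply: sqA => //; apply: (sA_add synA).
have -> : x * y = 2%:R^-1 *: ((x * y) *+ 2).
  by rewrite -scaler_nat scalerA mulVf ?scale1r // pnatr_eq0.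
exact: (sA_scale synA).
Qed.

Lemma proj_Pos (x : E) : proj A x -> x \in Pos.
Proof. by case=> xA xx; rewrite -xx; apply: (sSA2 synA). Qed.

Lemma proj_perp (x : E) : proj A x -> proj A (perp x).
Proof.
case=> xA xx; split; first exact: memA_sub (sA_1 synA) xA.
by rewrite /perp mulrBl mul1r mulrBr mulr1 xx subrr subr0.
Qed.

Lemma commutes_perpr (x y : E) : commutes x y -> commutes x (perp y).
Proof. by rewrite /commutes /perp mulrBr mulrBl mulr1 mul1r => ->. Qed.

(* The forward direction applies SA3 and SA4 to (1 - x)(x - z)(1 - x). *)
Lemma proj_leP (z x : E) : proj A z -> proj A x ->
  sle Pos z x <-> z * x = z /\ x * z = z.
Proof.
move=> pz px; have [zA zz] := pz; have [xA xx] := px.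
split=> [zx | [zxz xzx]]; last first.
  rewrite /sle; have -> : x - z = (x - z) * (x - z).
    by rewrite mulrBl !mulrBr xx zz zxz xzx subrr subr0.
  exact/(sSA2 synA)/memA_sub.
have px' := proj_perp px; have [x'A _] := px'.
have x'x : perp x * x = 0 by rewrite /perp mulrBl mul1r xx subrr.
have x'zx' : perp x * z * perp x = 0.
  apply: (sPos_antisym synA); first by apply: (sSA3 synA); apply: proj_Pos.
  rewrite -mulNr -(sub0r (perp x * z)) -x'x -mulrBr.
  by apply: (sSA3 synA) => //; apply: proj_Pos.
have [] := sSA4 synA x'A (proj_Pos pz) x'zx'.
by rewrite /perp mulrBl mulrBr mul1r mulr1 => /subr0_eq/esym x_z /subr0_eq/esym z_x.
Qed.

Lemma proj_le_perpP (z x : E) : proj A z -> proj A x ->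
  sle Pos z (perp x) <-> z * x = 0 /\ x * z = 0.
Proof.
move=> pz px; have pz_x' := proj_leP pz (proj_perp px).
rewrite /perp mulrBr mulrBl mulr1 mul1r in pz_x'.
split=> [/pz_x'[zx' x'z] | [zx xz]]; last by apply/pz_x'; rewrite zx xz !subr0.
by split; [rewrite -(subKr z (z * x)) zx' | rewrite -(subKr z (x * z)) x'z]; rewrite subrr.
Qed.

Lemma le_perpC (x y : E) : proj A x -> proj A y ->
  sle Pos x (perp y) -> sle Pos y (perp x).
Proof. by move=> px py; rewrite !proj_le_perpP // => -[-> ->]. Qed.

Lemma proj_le_perp_eq0 (z x : E) : proj A z -> proj A x ->
  sle Pos z x -> sle Pos z (perp x) -> z = 0.
Proof.
by move=> pz px /(proj_leP pz px)[zxz _] /(proj_le_perpP pz px)[zx0 _]; rewrite -zxz zx0.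
Qed.

Lemma is_meetP_unique (x y m m' : E) :
  is_meetP A Pos x y m -> is_meetP A Pos x y m' -> m = m'.
Proof.
move=> [pm [mx [my m_max]]] [pm' [m'x [m'y m'_max]]].
have := m'_max _ pm mx my; have := m_max _ pm' m'x m'y; rewrite /sle => m'm mm'.
by apply/esym/subr0_eq/(sPos_antisym synA); rewrite ?opprB.
Qed.

Lemma is_meetPC (x y m : E) : is_meetP A Pos x y m -> is_meetP A Pos y x m.
Proof. by move=> [pm [mx [my m_max]]]; do 3!split=> //; move=> z pz zy zx; apply: m_max. Qed.

Lemma is_joinP_perp (x y j : E) :
  is_joinP A Pos x y j -> is_meetP A Pos (perp x) (perp y) (perp j).
Proof.
move=> [pj [xj [yj j_min]]]; split; first exact: proj_perp.
rewrite !sle_perp; do 2!split=> //; move=> z pz.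
by rewrite -[z]perpK !sle_perp; apply/j_min/proj_perp.
Qed.

Lemma is_meetP_mul (x y : E) : proj A x -> proj A y -> commutes x y ->
  is_meetP A Pos x y (x * y).
Proof.
move=> px py cxy; have [xA xx] := px; have [yA yy] := py.
have pxy : proj A (x * y).
  by split; [exact: memA_mul_comm | rewrite mulrA -(mulrA x) -cxy mulrA xx -mulrA yy].
split=> //; split; first by apply/proj_leP; rewrite // -?mulrA -?cxy mulrA xx.
split; first by apply/proj_leP; rewrite // ?mulrA -?cxy -mulrA yy.
move=> z pz /(proj_leP pz px)[zx xz] /(proj_leP pz py)[zy yz].
by apply/proj_leP; rewrite // ?mulrA ?zx ?zy // -mulrA yz xz.
Qed.

Lemma is_meetP_perp_le (b x : E) : proj A b -> proj A x -> sle Pos b x ->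
  is_meetP A Pos x (perp b) (x - b).
Proof.
move=> pb px /(proj_leP pb px)[bx xb].
have xb' : x * perp b = x - b by rewrite /perp mulrBr mulr1 xb.
rewrite -xb'; apply: is_meetP_mul => //; first exact: proj_perp.
by rewrite /commutes xb' /perp mulrBl mul1r bx.
Qed.

Lemma commuting_proj_mul_eq0 (x y : E) : proj A x -> proj A y -> commutes x y ->
  (forall z, proj A z -> sle Pos z x -> sle Pos z y -> z = 0) -> x * y = 0.
Proof.
by move=> px py cxy z_eq0; have [pxy [xy_x [xy_y _]]] := is_meetP_mul px py cxy; apply: z_eq0.
Qed.

Section Residual.
(* Every lemma of this section takes all four hypotheses, so that the
   mirror instances (p and q swapped) are applied uniformly. *)
#[local] Set Default Proof Using "All".
Variables (p q a b : E).
Hypotheses (pp : proj A p) (pq : proj A q).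
Hypotheses (meet_a : is_meetP A Pos p q a) (meet_b : is_meetP A Pos p (perp q) b).

Lemma diff_meet : is_meetP A Pos p (perp b) (p - b).
Proof. by have [pb [bp _]] := meet_b; apply: is_meetP_perp_le. Qed.

Lemma residual_meet : is_meetP A Pos (p - b) (perp a) (p - b - a).
Proof.
have [pa [ap [aq _]]] := meet_a; have [pb [_ [bq' _]]] := meet_b.
have [pdiff [_ [_ diff_max]]] := diff_meet.
apply: is_meetP_perp_le => //; apply: diff_max => //.
exact/(sle_trans aq)/le_perpC.
Qed.

Lemma residual_eq (m r : E) : is_meetP A Pos p (perp b) m ->
  is_meetP A Pos m (perp a) r -> r = p - b - a.
Proof.
move=> /is_meetP_unique/(_ diff_meet) ->.
by move/is_meetP_unique; apply; apply: residual_meet.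
Qed.

Lemma residual_eq0 : commutes p q -> p - b - a = 0.
Proof.
move=> cpq; have -> : a = p * q := is_meetP_unique meet_a (is_meetP_mul pp pq cpq).
have -> : b = p * perp q.
  exact/(is_meetP_unique meet_b)/is_meetP_mul/commutes_perpr/cpq/proj_perp.
by rewrite /perp mulrBr mulr1 subKr subrr.
Qed.

Lemma residual_eq0_commutes : p - b - a = 0 -> commutes p q.
Proof.
have [pa [_ [/(proj_leP pa pq)[aq qa] _]]] := meet_a.
have [pb [_ [/(proj_le_perpP pb pq)[bq qb] _]]] := meet_b.
move=> /subr0_eq/(congr1 (+%R^~ b)); rewrite subrK => ->.
by rewrite /commutes mulrDl mulrDr aq qa bq qb.
Qed.

End Residual.

Lemma commuting_residuals_eq0 (p q a b c : E) : proj A p -> proj A q ->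
  is_meetP A Pos p q a -> is_meetP A Pos p (perp q) b ->
  is_meetP A Pos (perp p) q c ->
  commutes (p - b - a) (q - c - a) -> p - b - a = 0.
Proof.
move=> pp pq meet_a meet_b meet_c.
have [pa [_ [_ a_max]]] := meet_a; have [pb [bp [_ b_max]]] := meet_b.
have [pc [cp' _]] := meet_c.
have [pdiff [diff_p [diff_b' _]]] := diff_meet pp pq meet_a meet_b.
have [pr [r_diff [r_a' _]]] := residual_meet pp pq meet_a meet_b.
have meet_a' := is_meetPC meet_a; have meet_c' := is_meetPC meet_c.
have [ps [s_diff [s_a' _]]] := residual_meet pq pp meet_a' meet_c'.
have [_ [diff_q _]] := diff_meet pq pp meet_a' meet_c'.
have r_p := sle_trans r_diff diff_p; have r_b' := sle_trans r_diff diff_b'.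
move=> crs.
have rs : (p - b - a) * (q - c - a) = 0.
  apply: commuting_proj_mul_eq0 => // z pz zr zs.
  apply: (proj_le_perp_eq0 pz pa _ (sle_trans zr r_a')).
  exact: a_max pz (sle_trans zr r_p) (sle_trans zs (sle_trans s_diff diff_q)).
have rs' : (p - b - a) * perp (q - c - a) = 0.
  apply: commuting_proj_mul_eq0 => //; [exact: proj_perp | exact: commutes_perpr|].
  move=> z pz zr zs'; have zp := sle_trans zr r_p.
  have /(proj_le_perpP pz pa)[za az] := sle_trans zr r_a'.
  have /(proj_le_perpP pz pc)[zc cz] := sle_trans zp (le_perpC pc pp cp').
  have /(proj_le_perpP pz ps)[zs sz] := zs'.
  have zq' : sle Pos z (perp q).
    apply/(proj_le_perpP pz pq).
    have -> : z * q = z * (q - c - a) + z * a + z * c by rewrite -!mulrDr !subrK.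
    have -> : q * z = (q - c - a) * z + a * z + c * z by rewrite -!mulrDl !subrK.
    by rewrite zs sz za az zc cz !addr0.
  exact: proj_le_perp_eq0 pz pb (b_max _ pz zp zq') (sle_trans zr r_b').
by rewrite -[p - b - a]mulr1 -(subrK (q - c - a) 1) mulrDr rs' rs addr0.
Qed.

End Synaptic.

Theorem corollary3p5 (E : algType Rreal) (A Pos : {pred E}) :
  synaptic A Pos ->
  forall p q : E, proj A p -> proj A q ->
  forall j1 j2 j3 m1 m2 rp rq : E,
    (* j1 = p^perp \/ q,  j2 = p^perp \/ q^perp,  j3 = p \/ q^perp *)
    is_joinP A Pos (perp p) q j1 ->
    is_joinP A Pos (perp p) (perp q) j2 ->
    is_joinP A Pos p (perp q) j3 ->
    (* rp = (p /\ j1) /\ j2,  rq = (q /\ j3) /\ j2 *)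
    is_meetP A Pos p j1 m1 -> is_meetP A Pos m1 j2 rp ->
    is_meetP A Pos q j3 m2 -> is_meetP A Pos m2 j2 rq ->
    (commutes p q <-> (rp = 0 /\ rq = 0)) /\
    ((rp = 0 /\ rq = 0) <-> commutes rp rq).
Proof.
move=> synA p q pp pq j1 j2 j3 m1 m2 rp rq j1P j2P j3P m1P rpP m2P rqP.
have := is_joinP_perp synA j1P; have := is_joinP_perp synA j2P.
have := is_joinP_perp synA j3P; rewrite !perpK => meet_c meet_a meet_b.
have meet_a' := is_meetPC meet_a; have meet_c' := is_meetPC meet_c.
rewrite -[j1]perpK in m1P; rewrite -[j3]perpK in m2P; rewrite -[j2]perpK in rpP rqP.
rewrite (residual_eq synA pp pq meet_a meet_b m1P rpP).
rewrite (residual_eq synA pq pp meet_a' meet_c' m2P rqP).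
split; split.
- move=> cpq; rewrite (residual_eq0 synA pp pq meet_a meet_b cpq).
  by rewrite (residual_eq0 synA pq pp meet_a' meet_c' (esym cpq)).
- by case=> /(residual_eq0_commutes synA pp pq meet_a meet_b).
- by case=> -> ->.
- move=> crs; rewrite (commuting_residuals_eq0 synA pp pq meet_a meet_b meet_c crs).
  by rewrite (commuting_residuals_eq0 synA pq pp meet_a' meet_c' (is_meetPC meet_b) (esym crs)).
Qed.
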